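(* Let $p$ be a prime and let $a,b$ be integers with $0<a,b<p$. The following are equivalent: (1) $S^G_{a,b}$ is generated by 4 invariants, i.e. $|\mathrm{inv}_{a,b}|=4$ (equivalently, $\operatorname{codim}\ker\varphi_{a,b}=2$); (2) $\bigl(p-(a^{-1}b)_p\bigr)\bigl(p-(ab^{-1})_p\bigr)=p+1$.
   Context: Let $S=\mathbb{C}[x_1,x_2]$ with its standard grading, $\zeta=e^{2\pi i/p}$ and $G=\mathbb{Z}/p\mathbb{Z}=\langle\zeta\rangle$. For integers $a,b$, $G$ acts on $S$ by the $\mathbb{C}$-algebra automorphisms determined by $x_1\mapsto\zeta^a x_1$, $x_2\mapsto \zeta^b x_2$; $S^G_{a,b}$ denotes the ring of invariants. It is spanned by the invariant monomials $x_1^cx_2^d$, i.e. those with $ac+bd\equiv 0 \pmod p$. $\mathrm{inv}_{a,b}$ denotes the minimal set of monomial generators of $S^G_{a,b}$ as a $\mathbb{C}$-algebra: the nonconstant invariant monomials that are not a product of two nonconstant invariant monomials. ''$S^G_{a,b}$ is generated by $k$ invariants'' means $|\mathrm{inv}_{a,b}|=k$. Writing $\mathrm{inv}_{a,b}=\{z_0,\dots,z_n\}$ in lexicographic order with $x_1>x_2$, let $R=\mathbb{C}[y_0,\dots,y_n]$ with $\deg y_i=\deg z_i$ and let $\varphi_{a,b}:R\to S^G_{a,b}$ be the $\mathbb{C}$-algebra map $y_i\mapsto z_i$. For an integer $c$, $c_p$ denotes the unique integer $0\le c_p<p$ with $c\equiv c_p\pmod p$, and for $c$ not divisible by $p$,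 $c^{-1}$ denotes the unique integer $0<c^{-1}<p$ with $cc^{-1}\equiv 1\pmod p$. *)

From mathcomp Require Import all_boot.
Set Implicit Arguments. Unset Strict Implicit. Unset Printing Implicit Defensive.

(* A monomial x1^c x2^d of C[x1,x2] is encoded by its exponent pair (c, d).
   G = Z/pZ acts by x1 |-> zeta^a x1, x2 |-> zeta^b x2, so x1^c x2^d is
   invariant iff a*c + b*d = 0 (mod p). *)
Definition invariant_mono (p a b : nat) (m : nat * nat) : bool :=
  p %| a * m.1 + b * m.2.

Definition nonconstant_mono (m : nat * nat) : bool := m != (0, 0).

Definition in_inv (p a b : nat) (m : nat * nat) : Prop :=
  [/\ invariant_mono p a b m, nonconstant_mono m &
      ~ exists m1 m2 : nat * nat,
          [/\ invariant_mono p a b m1, nonconstant_mono m1,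
              invariant_mono p a b m2, nonconstant_mono m2 &
              m = (m1.1 + m2.1, m1.2 + m2.2)]].

Definition inv_card (p a b k : nat) : Prop :=
  exists s : seq (nat * nat),
    [/\ uniq s, size s = k & forall m, m \in s <-> in_inv p a b m].

(* c^{-1}: the unique 0 < x < p with c * x = 1 (mod p) (0 if none exists). *)
Definition modinv (p c : nat) : nat :=
  odflt 0 (omap (@nat_of_ord p) [pick x : 'I_p | c * x == 1 %[mod p]]).

Definition resp (p c : nat) : nat := c %% p.

From mathcomp Require Import all_boot zify.

(* Put r = p - (a^-1 b)_p and r' = p - (a b^-1)_p: the monomial x1^c x2^d is
   invariant iff c = r d, iff d = r' c (mod p).  The indecomposable invariants
   are the componentwise-minimal nonconstant invariant exponents; x1^p, x1^r x2,
   x1 x2^r' and x2^p always are, and any other one lies in the open box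
   0 < c < r, 0 < d < r'.  If r = 1 then r' = 1 and there are only three
   generators.  If r > 1, write p = q r + s with 0 < s < r: then
   x1^(r-s) x2^(q+1) is indecomposable, and it is one of the four above only if
   it is x1 x2^r', i.e. r r' = r (q+1) = p + 1.  Conversely, if r r' = p + 1,
   then for 0 < c < r the residue of r' c is either 0 or r' c >= r', so the box
   contains no invariant. *)

Set Implicit Arguments.
Unset Strict Implicit.

Lemma modinvP p a : prime p -> 0 < a < p ->
  0 < modinv p a < p /\ a * modinv p a = 1 %[mod p].
Proof.
move=> p_pr /andP[a_gt0 a_lt_p]; have p_gt1 := prime_gt1 p_pr.
rewrite /modinv; case: pickP => [x /eqP ax1 | no_inv] /=.
  split=> //; rewrite ltn_ord andbT lt0n; apply/eqP => x0.
  by move: ax1; rewrite x0 muln0 mod0n modn_small.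
have [u v Euv _] := egcdnP p a_gt0.
have coprime_ap : gcdn a p = 1.
  by apply/eqP; rewrite gcdnC -/(coprime p a) prime_coprime // gtnNdvd.
have := no_inv (Ordinal (ltn_pmod u (ltnW p_gt1))).
by rewrite /= modnMmr mulnC Euv coprime_ap -modnDml modnMl eqxx.
Qed.

Lemma resp_modinv_mul_gt0 p a b : prime p -> 0 < a < p -> 0 < b < p ->
  0 < resp p (modinv p a * b).
Proof.
move=> p_pr a_bd /andP[b_gt0 b_lt_p].
have [/andP[ia_gt0 ia_lt_p] _] := modinvP p_pr a_bd.
by rewrite lt0n /resp -/(dvdn _ _) Euclid_dvdM // !gtnNdvd.
Qed.

Lemma invariant_monoE p a b c d : prime p -> 0 < a < p -> 0 < b < p ->
  invariant_mono p a b (c, d) = (c == (p - resp p (modinv p a * b)) * d %[mod p]).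
Proof.
move=> p_pr a_bd b_bd; have [_ a_ia] := modinvP p_pr a_bd.
have k_lt_p : resp p (modinv p a * b) < p by rewrite ltn_pmod // prime_gt0.
set k := resp p _ in k_lt_p *.
have ak_b : a * k = b %[mod p].
  by rewrite modnMmr mulnA -modnMml a_ia modnMml mul1n.
rewrite -(eqn_modDr (k * d)) -mulnDl subnK 1?ltnW // modnMr -/(dvdn p _).
have <- : (p %| a * (c + k * d)) = (p %| c + k * d).
  by rewrite Euclid_dvdM // gtnNdvd //; case/andP: a_bd.
rewrite /invariant_mono /dvdn /= mulnDr mulnA; congr (_ == 0).
by rewrite -modnDmr -[RHS]modnDmr -modnMml -[in RHS]modnMml ak_b.
Qed.

Lemma nonconstant_monoE c d : nonconstant_mono (c, d) = (0 < c + d).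
Proof. by rewrite /nonconstant_mono xpair_eqE; case: c; case: d. Qed.

Lemma invariant_mono_subr p a b m1 m2 : invariant_mono p a b m1 ->
  invariant_mono p a b (m1.1 + m2.1, m1.2 + m2.2) -> invariant_mono p a b m2.
Proof. by rewrite /invariant_mono /= !mulnDr addnACA => /dvdn_addr->. Qed.

Lemma in_invP p a b c d : in_inv p a b (c, d) <->
  [/\ invariant_mono p a b (c, d), nonconstant_mono (c, d) &
      forall c' d', invariant_mono p a b (c', d') -> nonconstant_mono (c', d') ->
        c' <= c -> d' <= d -> (c', d') = (c, d)].
Proof.
split=> [[I N D] | [I N M]]; split=> //.
  move=> c' d' I' N' le_c le_d; case: (eqVneq (c', d') (c, d)) => // neq.
  case: D.
  exists (c', d'), (c - c', d - d'); split=> //=; last by congr pair; lia.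
    by apply: (invariant_mono_subr I'); rewrite /= !subnKC.
  by move: neq; rewrite nonconstant_monoE xpair_eqE; lia.
case=> -[c1 d1] [[c2 d2] [I1 N1 _ N2 /= [Ec Ed]]].
have [E1 E2] := M c1 d1 I1 N1 (ltac:(lia)) (ltac:(lia)).
by move: N2; rewrite nonconstant_monoE; lia.
Qed.

Lemma inv_card_leq p a b k s :
  inv_card p a b k -> (forall m, in_inv p a b m -> m \in s) -> k <= size s.
Proof.
case=> s' [uniq_s' <- mem_s'] sub_s.
by apply: uniq_leq_size => // m /mem_s'; apply: sub_s.
Qed.

Lemma inv_card_mem p a b k s : inv_card p a b k -> uniq s -> size s = k ->
  (forall m, m \in s -> in_inv p a b m) -> forall m, in_inv p a b m -> m \in s.
Proof.
case=> s' [_ size_s' mem_s'] uniq_s size_s sub_s m /mem_s'.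
have sub_ss' : {subset s <= s'} by move=> x /sub_s /mem_s'.
have le_size : size s' <= size s by rewrite size_s size_s'.
by have [_ ->] := uniq_min_size uniq_s sub_ss' le_size.
Qed.

Section InvariantsOfSlope.

Variables (p a b r r' : nat).
Hypotheses (p_prime : prime p) (r_gt0 : 0 < r) (r_lt_p : r < p).
Hypotheses (r'_gt0 : 0 < r') (r'_lt_p : r' < p).
Hypothesis invariantE : forall c d, invariant_mono p a b (c, d) = (c == r * d %[mod p]).
Hypothesis invariantE' : forall c d, invariant_mono p a b (c, d) = (d == r' * c %[mod p]).

Let p_gt1 : 1 < p := prime_gt1 p_prime.

Lemma invariant_x1 c : invariant_mono p a b (c, 0) -> 0 < c -> p <= c.
Proof. by rewrite invariantE muln0 mod0n => p_dvd_c c_gt0; apply: dvdn_leq. Qed.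

Lemma invariant_x2 d : invariant_mono p a b (0, d) -> 0 < d -> p <= d.
Proof. by rewrite invariantE' muln0 mod0n => p_dvd_d d_gt0; apply: dvdn_leq. Qed.

Lemma eq_r1_r'1 : (r == 1) = (r' == 1).
Proof.
have : invariant_mono p a b (r, 1) by rewrite invariantE muln1.
rewrite invariantE' (modn_small p_gt1) => rr'1.
by apply/eqP/eqP=> [r1 | r'1]; move: rr'1;
  rewrite ?r1 ?r'1 ?muln1 ?mul1n modn_small // eq_sym => /eqP.
Qed.

Lemma in_inv_x1p : in_inv p a b (p, 0).
Proof.
apply/in_invP; split; first by rewrite invariantE muln0 modnn mod0n.
  by rewrite nonconstant_monoE; lia.
move=> c d I N le_c /[!leqn0] /eqP d0; subst d.
by have := invariant_x1 I; rewrite nonconstant_monoE in N; move=> ?; congr pair; lia.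
Qed.

Lemma in_inv_x2p : in_inv p a b (0, p).
Proof.
apply/in_invP; split; first by rewrite invariantE' muln0 modnn mod0n.
  by rewrite nonconstant_monoE; lia.
move=> c d I N /[!leqn0] /eqP c0 le_d; subst c.
by have := invariant_x2 I; rewrite nonconstant_monoE in N; move=> ?; congr pair; lia.
Qed.

Lemma in_inv_x1rx2 : in_inv p a b (r, 1).
Proof.
apply/in_invP; split; first by rewrite invariantE muln1.
  by rewrite nonconstant_monoE; lia.
move=> c d I N le_c; case: d I N => [|[|//]] I N _.
  by have := invariant_x1 I; rewrite nonconstant_monoE in N; lia.
by move: I; rewrite invariantE muln1 !modn_small; [move=> /eqP-> | lia | lia].
Qed.

Lemma in_inv_x1x2r' : in_inv p a b (1, r').
Proof.
apply/in_invP; split; first by rewrite invariantE' muln1.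
  by rewrite nonconstant_monoE.
move=> c d I N; case: c I N => [|[|//]] I N _ le_d.
  by have := invariant_x2 I; rewrite nonconstant_monoE in N; lia.
by move: I; rewrite invariantE' muln1 !modn_small; [move=> /eqP-> | lia | lia].
Qed.

Definition generators := [:: (p, 0); (r, 1); (1, r'); (0, p)].

Lemma in_inv_generators m : m \in generators -> in_inv p a b m.
Proof.
rewrite /generators !inE => /or4P[] /eqP->;
  [exact: in_inv_x1p | exact: in_inv_x1rx2 | exact: in_inv_x1x2r' | exact: in_inv_x2p].
Qed.

Lemma in_inv_classify c d : in_inv p a b (c, d) ->
  (c, d) \in generators \/ (0 < c < r /\ 0 < d < r').
Proof.
case/in_invP=> I N min_cd; rewrite nonconstant_monoE in N.
have gen c' d' : in_inv p a b (c', d') -> c' <= c -> d' <= d -> (c, d) = (c', d').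
  by case/in_invP=> I' N' _ le_c le_d; rewrite (min_cd c' d').
rewrite /generators.
case: (posnP c) => [c0 | c_gt0].
  subst c; left; rewrite (gen 0 p in_inv_x2p) ?inE ?eqxx ?orbT //.
  exact: invariant_x2.
case: (posnP d) => [d0 | d_gt0].
  subst d; left; rewrite (gen p 0 in_inv_x1p) ?inE ?eqxx ?orbT //.
  exact: invariant_x1.
case: (leqP r c) => [le_rc | lt_cr].
  by left; rewrite (gen r 1 in_inv_x1rx2) ?inE ?eqxx ?orbT.
case: (leqP r' d) => [le_r'd | lt_dr'].
  by left; rewrite (gen 1 r' in_inv_x1x2r') ?inE ?eqxx ?orbT.
by right; lia.
Qed.

Lemma in_inv_quotient : 1 < r -> in_inv p a b (r - p %% r, (p %/ r).+1).
Proof.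
move=> r_gt1; have Ep := divn_eq p r; have s_lt_r := ltn_pmod p r_gt0.
set q := p %/ r in Ep *; set s := p %% r in Ep s_lt_r *.
have s_gt0 : 0 < s.
  rewrite lt0n; apply: contraTneq r_lt_p => /eqP r_dvd_p.
  by rewrite -leqNgt (prime_nt_dvdP p_prime _ r_dvd_p) // neq_ltn r_gt1 orbT.
have r_q1 : r * q.+1 = (r - s) + p by nia.
apply/in_invP; split; first by rewrite invariantE r_q1 modnDr.
  by rewrite nonconstant_monoE; lia.
move=> c d I N le_c le_d.
have c_lt_p : c < p by lia.
case: (posnP d) => [d0 | d_gt0].
  by subst d; have := invariant_x1 I; rewrite nonconstant_monoE in N; lia.
move: I; rewrite invariantE (modn_small c_lt_p) => /eqP c_rd.
case: (ltnP d q.+1) => [lt_dq1 | le_q1d].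
  by move: c_rd; rewrite modn_small; nia.
have d_q1 : d = q.+1 by lia.
by move: c_rd; rewrite d_q1 r_q1 modnDr modn_small => [->|]; last lia.
Qed.

Lemma not_invariant_inner c d : r * r' = p + 1 -> 0 < c < r -> 0 < d < r' ->
  ~~ invariant_mono p a b (c, d).
Proof.
move=> rr' c_bd d_bd; rewrite invariantE' (modn_small (_ : d < p)); last by lia.
case: (ltnP (r' * c) p) => [lt_r'c_p | le_p_r'c].
  by rewrite modn_small //; nia.
have -> : r' * c = p by nia.
by rewrite modnn; lia.
Qed.

Lemma uniq_generators : 1 < r -> uniq generators.
Proof.
move=> r_gt1; have r'_gt1 : 1 < r' by have := eq_r1_r'1; lia.
by rewrite /= !inE !xpair_eqE; lia.
Qed.

Lemma inv_card4_iff : inv_card p a b 4 <-> r * r' = p + 1.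
Proof.
split=> [card4 | rr'].
  case: (ltngtP r 1) => [| r_gt1 | r1]; first by lia.
    have := inv_card_mem card4 (uniq_generators r_gt1) erefl in_inv_generators
      (in_inv_quotient r_gt1).
    have := divn_eq p r; have := ltn_pmod p r_gt0.
    by rewrite /generators !inE !xpair_eqE; nia.
  have r'1 : r' = 1 by apply/eqP; rewrite -eq_r1_r'1 r1.
  suff : 4 <= size [:: (p, 0); (1, 1); (0, p)] by [].
  apply: (inv_card_leq card4) => -[c d] /in_inv_classify[|]; last by lia.
  by rewrite /generators r1 r'1 !inE => /or4P[] ->; rewrite ?orbT.
have r_gt1 : 1 < r by nia.
exists generators; split=> //; first exact: uniq_generators.
move=> [c d]; split=> [/in_inv_generators // | I].
case: (in_inv_classify I) => // -[c_bd d_bd].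
by case: I => I _ _; have := not_invariant_inner rr' c_bd d_bd; rewrite I.
Qed.

End InvariantsOfSlope.

Theorem theorem1p2 (p a b : nat) :
  prime p -> 0 < a < p -> 0 < b < p ->
  (inv_card p a b 4 <->
   (p - resp p (modinv p a * b)) * (p - resp p (a * modinv p b)) = p + 1).
Proof.
move=> p_pr a_bd b_bd; have p_gt0 := prime_gt0 p_pr.
have k_gt0 := resp_modinv_mul_gt0 p_pr a_bd b_bd.
have k'_gt0 := resp_modinv_mul_gt0 p_pr b_bd a_bd.
have k_lt_p := ltn_pmod (modinv p a * b) p_gt0.
have k'_lt_p := ltn_pmod (modinv p b * a) p_gt0.
rewrite /resp in k_gt0 k'_gt0 *; rewrite [a * _]mulnC.
apply: inv_card4_iff => //; try lia.
  by move=> c d; rewrite invariant_monoE.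
by move=> c d; rewrite /invariant_mono /= addnC -(invariant_monoE _ _ p_pr b_bd a_bd).
Qed.
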